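(* For every $n\geq 0$, the partially ordered set $\mathcal{L}_n^*$ is a distributive lattice.
   Context: Games are finite partizan games; $o(G)$ is the misère outcome class (ordered $\mathscr{L}>\mathscr{N}>\mathscr{R}$, $\mathscr{L}>\mathscr{P}>\mathscr{R}$). A universe is a set of games closed under options, disjunctive sums, conjugates, and forming $\{\mathscr{G}^L\mid\mathscr{G}^R\}$ from nonempty finite subsets of it; $G\geq_\mathcal{U}H$ means $o(G+X)\geq o(H+X)$ for all $X\in\mathcal{U}$. A Left dead-end is a game all of whose subpositions have no Left option. For Left dead-ends, $G\geq H$ means $G\geq_\mathcal{U}H$ for every universe $\mathcal{U}$, and $G=H$ means $G\geq H$ and $H\geq G$. The birthday of a Left dead-end $G$ is the minimum height of the game tree of a Left dead-end $H$ with $H=G$. $\mathcal{L}_n$ is the set of $=$-equivalence classes of Left dead-ends of birthday $\leq n$, partially ordered by $\geq$; $\mathcal{L}_n^\times=\mathcal{L}_n\setminus\{0\}$; $\mathcal{L}_n^*=\mathcal{L}_n^\times\cup\{\triangledown\}$ where $\triangledown$ is a new element with $\triangledown\geq G$ for all $G\in\mathcal{L}_n^\times$. *)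

From mathcomp Require Import all_boot.
Set Implicit Arguments. Unset Strict Implicit. Unset Printing Implicit Defensive.

(* Finite partizan game forms: {Left options | Right options}. *)
Inductive game : Type := Game : seq game -> seq game -> game.

Definition leftOpts (G : game) : seq game := let: Game Ls _ := G in Ls.
Definition rightOpts (G : game) : seq game := let: Game _ Rs := G in Rs.

(* list membership (game has no eqType instance) *)
Fixpoint inl (x : game) (s : seq game) : Prop :=
  if s is y :: s' then y = x \/ inl x s' else False.

Definition zero : game := Game [::] [::].

(* Misère play: a player who cannot move on their turn wins.
   wins G = (Left wins moving first, Right wins moving first). *)
Fixpoint wins (G : game) : bool * bool :=
  let: Game Ls Rs := G in
  (nilp Ls || has (fun GL => ~~ (wins GL).2) Ls,
   nilp Rs || has (fun GR => ~~ (wins GR).1) Rs).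

Inductive outcome : Type := oL | oN | oP | oR.

Definition o (G : game) : outcome :=
  match wins G with
  | (true, false) => oL
  | (true, true) => oN
  | (false, false) => oP
  | (false, true) => oR
  end.

(* outcome_le a b  <->  a <= b  in the order  L > N > R,  L > P > R. *)
Definition outcome_le (a b : outcome) : bool :=
  match a, b with
  | oR, _ => true
  | _, oL => true
  | oN, oN => true
  | oP, oP => true
  | _, _ => false
  end.

Fixpoint gsum (G H : game) {struct G} : game :=
  let fix sumH (H : game) : game :=
    let: Game GL GR := G in
    let: Game HL HR := H in
    Game (map (fun g => gsum g H) GL ++ map sumH HL)
         (map (fun g => gsum g H) GR ++ map sumH HR)
  in sumH H.

Fixpoint conj (G : game) : game :=
  let: Game Ls Rs := G in Game (map conj Rs) (map conj Ls).

Definition universe (U : game -> Prop) : Prop :=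
  (forall G, U G -> forall G', inl G' (leftOpts G) -> U G') /\
  (forall G, U G -> forall G', inl G' (rightOpts G) -> U G') /\
  (forall G H, U G -> U H -> U (gsum G H)) /\
  (forall G, U G -> U (conj G)) /\
  (forall Ls Rs : seq game, Ls <> [::] -> Rs <> [::] ->
     (forall G, inl G Ls -> U G) -> (forall G, inl G Rs -> U G) ->
     U (Game Ls Rs)).

Definition ge_in (U : game -> Prop) (G H : game) : Prop :=
  forall X, U X -> outcome_le (o (gsum H X)) (o (gsum G X)).

Definition gge (G H : game) : Prop := forall U, universe U -> ge_in U G H.

Definition geq (G H : game) : Prop := gge G H /\ gge H G.

Fixpoint ldead (G : game) : bool :=
  let: Game Ls Rs := G in nilp Ls && all ldead Rs.

Fixpoint height (G : game) : nat :=
  let: Game Ls Rs := G in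
  foldr maxn 0 (map (fun g => (height g).+1) Ls ++ map (fun g => (height g).+1) Rs).

Definition is_birthday (G : game) (b : nat) : Prop :=
  (exists H, ldead H /\ geq H G /\ height H = b) /\
  (forall H, ldead H -> geq H G -> b <= height H).

(* Representatives of elements of L_n^x : Left dead-ends of birthday <= n,
   not equal to 0. *)
Definition Lx_rep (n : nat) (G : game) : Prop :=
  ldead G /\ (exists b, is_birthday G b /\ b <= n) /\ ~ geq G zero.

(* Carrier of L_n^* : None is the new top element (triangledown),
   Some G ranges over representatives of L_n^x. *)
Definition Lstar (n : nat) : Type := option {G : game | Lx_rep n G}.

Definition Lstar_le (n : nat) (x y : Lstar n) : Prop :=
  match x, y with
  | _, None => True
  | None, Some _ => False
  | Some a, Some b => gge (proj1_sig b) (proj1_sig a)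
  end.

(* Generic order notions for a preordered type; the poset is its quotient
   by mutual <=. *)
Definition is_lub (T : Type) (le : T -> T -> Prop) (x y z : T) : Prop :=
  le x z /\ le y z /\ forall w, le x w -> le y w -> le z w.

Definition is_glb (T : Type) (le : T -> T -> Prop) (x y z : T) : Prop :=
  le z x /\ le z y /\ forall w, le w x -> le w y -> le w z.

(* The poset (quotient of T by mutual le) is a distributive lattice:
   all binary joins and meets exist, and x /\ (y \/ z) = (x /\ y) \/ (x /\ z). *)
Definition distributive_lattice (T : Type) (le : T -> T -> Prop) : Prop :=
  (forall x y : T, exists z, is_lub le x y z) /\
  (forall x y : T, exists z, is_glb le x y z) /\
  (forall x y z j m a b c : T,
     is_lub le y z j -> is_glb le x j m ->
     is_glb le x y a -> is_glb le x z b -> is_lub le a b c ->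
     le m c /\ le c m).

(* For Left dead-ends, G >= H holds exactly when G = 0 forces H = 0 and every
   Right option of G dominates some Right option of H ([dge]).  Soundness is an
   induction on G and on the summand X; completeness comes from a probe game
   that Left, moving first, wins against H exactly when G is not >= H.
   Hence an element G of L_n^x is determined by the up-set of its Right options
   among Left dead-ends, and G <= H iff the up-set of H is contained in that of
   G, with the top element triangledown sent to the empty set.  Under this
   antitone embedding meets are unions (pool the Right options of both games)
   and joins are intersections, realised by the game whose Right options are
   the recursive joins of pairs of Right options.  Both constructions stay
   within height n, so L_n^* is dual to a lattice of sets under union and
   intersection, hence distributive. *)

From Pilot Require Import Defs.
From HB Require Import structures.
From mathcomp Require Import all_boot.
From Stdlib Require Import Classical.
Set Implicit Arguments. Unset Strict Implicit. Unset Printing Implicit Defensive.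

Lemma ex_minimal_nat (P : nat -> Prop) k : P k -> exists2 b, P b & forall j, P j -> b <= j.
Proof.
move=> Pk; apply: NNPP => no_min; suff notP j : ~ P j by exact: notP Pk.
elim/ltn_ind: j => j IH Pj; apply: no_min; exists j => // i Pi.
by rewrite leqNgt; apply/negP => /IH; apply.
Qed.

Section AntitoneSetRepresentation.
Variables (T U : Type) (le : T -> T -> Prop) (rep : T -> U -> bool).
Hypothesis le_rep : forall x y, le x y <-> (forall u, rep y u -> rep x u).
Hypothesis rep_join : forall x y, exists z, forall u, rep z u = rep x u && rep y u.
Hypothesis rep_meet : forall x y, exists z, forall u, rep z u = rep x u || rep y u.

Lemma is_lub_rep x y z : is_lub le x y z <-> forall u, rep z u = rep x u && rep y u.
Proof.
split=> [[/le_rep xz [/le_rep yz z_min]] u | repz].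
  have [j repj] := rep_join x y.
  have /le_rep jz : le z j by apply: z_min; apply/le_rep => v; rewrite repj => /andP[].
  apply/idP/andP => [zu | [xu yu]]; first by split; [apply: xz | apply: yz].
  by apply: jz; rewrite repj xu.
split; [|split]; try by apply/le_rep => u; rewrite repz => /andP[].
by move=> w /le_rep xw /le_rep yw; apply/le_rep => u wu; rewrite repz xw ?yw.
Qed.

Lemma is_glb_rep x y z : is_glb le x y z <-> forall u, rep z u = rep x u || rep y u.
Proof.
split=> [[/le_rep zx [/le_rep zy z_max]] u | repz].
  have [m repm] := rep_meet x y.
  have /le_rep mz : le m z by apply: z_max; apply/le_rep => v vP; rewrite repm vP ?orbT.
  by apply/idP/orP => [/mz | [/zx | /zy] //]; rewrite repm => /orP.
split; [|split]; try by apply/le_rep => u uP; rewrite repz uP ?orbT.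
by move=> w /le_rep wx /le_rep wy; apply/le_rep => u; rewrite repz => /orP[/wx | /wy].
Qed.

Lemma distributive_lattice_rep : distributive_lattice le.
Proof.
split; [|split] => [x y | x y | x y z j m a b c].
- by have [z repz] := rep_join x y; exists z; apply/is_lub_rep.
- by have [z repz] := rep_meet x y; exists z; apply/is_glb_rep.
move=> /is_lub_rep j_yz /is_glb_rep m_xj /is_glb_rep a_xy /is_glb_rep b_xz /is_lub_rep c_ab.
have mc u : rep m u = rep c u by rewrite m_xj j_yz c_ab a_xy b_xz orb_andr.
by split; apply/le_rep => u; rewrite mc.
Qed.

End AntitoneSetRepresentation.

(* Stated with [inl] because the eqType structure of [game] is derived from it. *)
Definition game_inl_ind (P : game -> Prop)
  (IH : forall Ls Rs, (forall g, inl g Ls -> P g) -> (forall g, inl g Rs -> P g) ->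
        P (Game Ls Rs)) : forall G, P G :=
  fix F (G : game) : P G :=
    let fix Fs (s : seq game) : forall g, inl g s -> P g :=
      match s with
      | [::] => fun g gs => False_ind _ gs
      | x :: s' => fun g gs =>
          match gs with or_introl e => eq_ind x P (F x) g e | or_intror gs' => Fs s' g gs' end
      end in
    let: Game Ls Rs := G in IH Ls Rs (Fs Ls) (Fs Rs).

Fixpoint tree_of_game (G : game) : GenTree.tree unit :=
  let: Game Ls Rs := G in GenTree.Node (size Ls) (map tree_of_game Ls ++ map tree_of_game Rs).

Fixpoint game_of_tree (t : GenTree.tree unit) : game :=
  if t is GenTree.Node k ts then
    let gs := map game_of_tree ts in Game (take k gs) (drop k gs)
  else zero.

Lemma tree_of_gameK : cancel tree_of_game game_of_tree.
Proof.
have map_id_inl f s : (forall g, inl g s -> f g = g) -> map f s = s.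
  by elim: s => //= x s IHs fs; rewrite fs ?IHs //; [move=> g gs; apply: fs; right | left].
elim/game_inl_ind => Ls Rs IHL IHR /=.
rewrite -map_cat -map_comp map_id_inl ?take_size_cat ?drop_size_cat // => g.
elim: Ls IHL => [|x Ls IHLs] IHL /=; first exact: IHR.
case=> [<-|gs]; first by apply: IHL; left.
by apply: IHLs => // h hs; apply: IHL; right.
Qed.

HB.instance Definition _ := Equality.copy game (can_type tree_of_gameK).

Lemma inlE (x : game) s : inl x s <-> x \in s.
Proof.
elim: s => //= y s IHs; rewrite inE.
by split=> [[->|/IHs->]|/orP[/eqP->|/IHs]]; rewrite ?eqxx ?orbT; auto.
Qed.

Lemma game_ind (P : game -> Prop) :
  (forall Ls Rs, {in Ls, forall g, P g} -> {in Rs, forall g, P g} -> P (Game Ls Rs)) ->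
  forall G, P G.
Proof. by move=> IH; elim/game_inl_ind => Ls Rs IHL IHR; apply: IH => g /inlE; auto. Qed.

Definition wL (G : game) : bool := (wins G).1.
Definition wR (G : game) : bool := (wins G).2.

Lemma outcome_leE G H :
  outcome_le (o G) (o H) = (wL G ==> wL H) && (wR H ==> wR G).
Proof. by rewrite /o /wL /wR; case: (wins G) => [[] []]; case: (wins H) => [[] []]. Qed.

Lemma ldeadP G : ldead G -> exists2 GR, G = Game [::] GR & {in GR, forall g, ldead g}.
Proof. by case: G => GL GR /andP[/nilP-> /allP]; exists GR. Qed.

Section SumWithDeadEnd.
Variable B : game.
Hypothesis B_dead : ldead B.

Lemma wL_gsum_dead X :
  wL (gsum B X) = nilp (leftOpts X) || has (fun x => ~~ wR (gsum B x)) (leftOpts X).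
Proof.
by have [BR -> _] := ldeadP B_dead; case: X => XL XR; rewrite /wL /wR /= /nilp size_map has_map.
Qed.

Lemma wR_gsum_dead X :
  wR (gsum B X) = [|| nilp (rightOpts B) && nilp (rightOpts X),
                      has (fun b => ~~ wL (gsum b X)) (rightOpts B)
                    | has (fun x => ~~ wL (gsum B x)) (rightOpts X)].
Proof.
have [BR -> _] := ldeadP B_dead; case: X => XL XR.
by rewrite /wL /wR /= /nilp size_cat addn_eq0 !size_map has_cat !has_map.
Qed.

End SumWithDeadEnd.

(* Otherwise [/=] unfolds sums of concrete games and their outcomes. *)
Arguments gsum : simpl never.
Arguments wL : simpl never.
Arguments wR : simpl never.

Fixpoint dge (G H : game) {struct G} : bool :=
  let: Game _ GR := G in
  if nilp GR then nilp (rightOpts H) else all (fun g => has (dge g) (rightOpts H)) GR.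

Definition above (A g : game) : bool := has (dge g) (rightOpts A).

Lemma dgeE G H :
  dge G H = if nilp (rightOpts G) then nilp (rightOpts H) else all (above H) (rightOpts G).
Proof. by case: G. Qed.

Lemma dge_ropt G H g : dge G H -> g \in rightOpts G -> above H g.
Proof. by rewrite dgeE; case: ifP => [/nilP-> //|_ /allP]; apply. Qed.

Lemma dge_refl G : dge G G.
Proof.
elim/game_ind: G => GL GR _ IHR; rewrite dgeE /=; case: ifP => // _.
by apply/allP => g gR; apply/hasP; exists g; last exact: IHR.
Qed.

Lemma above_ropt A g : g \in rightOpts A -> above A g.
Proof. by move=> gA; apply/hasP; exists g; last exact: dge_refl. Qed.

Lemma dge_trans G H K : dge G H -> dge H K -> dge G K.
Proof.
elim/game_ind: G H K => GL GR _ IHR H K GH HK; rewrite dgeE /=.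
case: ifP => [G0 | _]; first by move: GH HK; rewrite !dgeE /= G0 => ->.
apply/allP => g gG; have /hasP[h hH gh] := dge_ropt GH gG.
have /hasP[k kK hk] := dge_ropt HK hH.
by apply/hasP; exists k; last exact: IHR gh hk.
Qed.

Lemma above_nonzero A g : above A g -> ~~ nilp (rightOpts A).
Proof. by case: A => AL [|a AR]. Qed.

Lemma dge_nonzero_r G H : dge G H -> ~~ nilp (rightOpts G) -> ~~ nilp (rightOpts H).
Proof. by case: G => GL [|g GR] // /dge_ropt/(_ (mem_head g GR))/above_nonzero. Qed.

Lemma dge_nonzero_l G H : dge G H -> ~~ nilp (rightOpts H) -> ~~ nilp (rightOpts G).
Proof. by rewrite dgeE; case: ifP => [_ ->|/negbT]. Qed.

Lemma dge_single g A : dge (Game [::] [:: g]) A = above A g.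
Proof. by rewrite dgeE /= andbT. Qed.

Lemma dge_above G H : ~~ nilp (rightOpts G) -> ~~ nilp (rightOpts H) ->
  dge G H <-> (forall g, above G g -> above H g).
Proof.
move=> /negPf G0 H0; rewrite dgeE G0; split=> [/allP GH g /hasP[r rG gr] | GH].
  by have /hasP[h hH rh] := GH r rG; apply/hasP; exists h; last exact: dge_trans gr rh.
by apply/allP => r /above_ropt/GH.
Qed.

Lemma dge_nil_r G H : nilp (rightOpts H) -> dge G H = nilp (rightOpts G).
Proof. by rewrite dgeE /above => /nilP->; case: G => GL [|g GR]. Qed.

Fixpoint djoin (G H : game) {struct G} : option game :=
  let: Game _ GR := G in
  let Js := pmap id [seq djoin g h | g <- GR, h <- rightOpts H] in
  if nilp GR && nilp (rightOpts H) then Some zero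
  else if nilp Js then None else Some (Game [::] Js).

Definition join_ropts (G H : game) : seq game :=
  pmap id [seq djoin g h | g <- rightOpts G, h <- rightOpts H].

Lemma djoinE G H : djoin G H =
  if nilp (rightOpts G) && nilp (rightOpts H) then Some zero
  else if nilp (join_ropts G H) then None else Some (Game [::] (join_ropts G H)).
Proof. by case: G. Qed.

Lemma dge_djoin X G H :
  dge X G && dge X H = if djoin G H is Some J then dge X J else false.
Proof.
elim/game_ind: G X H => GL GR _ IHR X H; set G := Game GL GR.
have above_join x : above G x && above H x = has (dge x) (join_ropts G H).
  apply/andP/hasP => [[/hasP[g gG xg] /hasP[h hH xh]] | [j]].
    have := IHR g gG x h; rewrite xg xh; case E: (djoin g h) => [j|] // xj.
    by exists j => //; rewrite mem_pmap map_id -E; apply: allpairs_f.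
  rewrite mem_pmap map_id => /allpairsP[[g h] /= [gG hH E]] xj.
  have := IHR g gG x h; rewrite -E xj => /andP[xg xh].
  by split; apply/hasP; [exists g | exists h].
rewrite djoinE; case: ifP => [/andP[G0 H0] | GH0]; first by rewrite !dge_nil_r ?andbb.
rewrite !(dgeE X); case: ifP => X0.
  by rewrite GH0; case: ifP => // J0; rewrite dgeE X0 /= J0.
rewrite -all_predI (eq_all above_join); case: ifP => [/nilP-> | _]; last by rewrite dgeE X0.
by case: (rightOpts X) X0.
Qed.

Lemma dge_wins G H X : ldead G -> ldead H -> dge G H ->
  (wL (gsum H X) -> wL (gsum G X)) /\ (wR (gsum G X) -> wR (gsum H X)).
Proof.
elim/game_ind: G H X => GL GR _ IHG H X dG dH GH.
have /andP[_ /allP dGR] := dG; have [HR HE dHR] := ldeadP dH; subst H.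
elim/game_ind: X => XL XR IHXL IHXR; rewrite !wL_gsum_dead // !wR_gsum_dead //=.
split=> [/orP[->//|/hasP[x xL Hx]] | /or3P[/andP[G0 ->]|/hasP[g gR gX]|/hasP[x xR Gx]]].
- by apply/orP; right; apply/hasP; exists x => //; apply: contra Hx; case: (IHXL x xL).
- by move: GH; rewrite dgeE /= G0 => ->.
- have /hasP[h hR gh] := dge_ropt GH gR.
  apply/or3P; apply: Or32; apply/hasP; exists h => //; apply: contra gX.
  by case: (IHG g gR h (Game XL XR) (dGR g gR) (dHR h hR) gh).
- by apply/or3P; apply: Or33; apply/hasP; exists x => //; apply: contra Gx; case: (IHXR x xR).
Qed.

Fixpoint probe_opts (A : game) : seq game :=
  let: Game _ AR := A in
  if nilp AR then [:: zero] else map (fun a => Game (probe_opts a) [:: zero]) AR.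

(* Should Right answer inside the probe, he moves to [zero], leaving Left with no
   move: she wins in misere play.  So Right must reply in B. *)
Definition probe (A : game) : game := Game (probe_opts A) [::].

Lemma wL_gsum_probe A B : ldead B -> wL (gsum B (probe A)) = ~~ dge A B.
Proof.
elim/game_ind: A B => AL AR _ IHR B dB; have [BR BE dBR] := ldeadP dB; subst B.
rewrite wL_gsum_dead // dgeE /=.
case: ifP => AR0.
  rewrite orFb has_seq1 wR_gsum_dead // andbT orbF; congr (~~ _).
  rewrite [has _ _](_ : _ = false) ?orbF //.
  by apply/hasPn => b bR; rewrite negbK wL_gsum_dead ?dBR.
rewrite /nilp size_map -/(nilp AR) AR0 orFb has_map -has_predC; apply: eq_in_has => a aR.
rewrite /= wR_gsum_dead // andbF orFb has_seq1 wL_gsum_dead // orbF.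
congr (~~ _); apply: eq_in_has => b bR /=.
by rewrite -[dge a b]negbK -(IHR a aR b (dBR b bR)) !wL_gsum_dead ?dBR.
Qed.

Lemma universeT : universe (fun=> True).
Proof. by do 4 (split; first by []). Qed.

Lemma gge_dgeP G H : ldead G -> ldead H -> gge G H <-> dge G H.
Proof.
move=> dG dH; split=> [GH | GH U _ X _].
  have := GH _ universeT (probe G) I.
  by rewrite outcome_leE !wL_gsum_probe // dge_refl implybF negbK => /andP[].
have [LHG RGH] := dge_wins X dG dH GH.
by rewrite outcome_leE; apply/andP; split; apply/implyP.
Qed.

Lemma geq_refl G : Defs.geq G G.
Proof. by split=> U _ X _; rewrite outcome_leE !implybb. Qed.

Lemma geq_zeroP G : ldead G -> Defs.geq G zero <-> nilp (rightOpts G).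
Proof.
move=> dG; rewrite /Defs.geq; split=> [[/gge_dgeP GZ _] | G0].
  by rewrite -(@dge_nil_r G zero) ?GZ.
by split; apply/gge_dgeP; rewrite ?dge_nil_r.
Qed.

Lemma height_dead_le Rs k : (height (Game [::] Rs) <= k) = all (fun g => height g < k) Rs.
Proof. by elim: Rs => //= r Rs IHRs; rewrite geq_max IHRs. Qed.

Lemma height_ropt G g : g \in rightOpts G -> height g < height G.
Proof.
case: G => GL GR gG /=; set s := (X in foldr _ _ X).
have : (height g).+1 \in s by rewrite mem_cat (map_f _ gG) orbT.
by elim: s => //= m s IHs; rewrite inE leq_max => /orP[/eqP->|/IHs->]; rewrite ?leqnn ?orbT.
Qed.

Lemma djoin_dead_height G H J :
  djoin G H = Some J -> ldead J && (height J <= maxn (height G) (height H)).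
Proof.
elim/game_ind: G H J => GL GR _ IHR H J; rewrite djoinE.
case: ifP => [_ [<-] //|_]; case: ifP => // _ [<-].
rewrite /= height_dead_le -all_predI; apply/allP => j.
rewrite mem_pmap map_id => /allpairsP[[g h] /= [gG hH /esym/(IHR g gG)/andP[dj hj]]].
rewrite /= dj (leq_ltn_trans hj) // gtn_max !leq_max (height_ropt hH).
by rewrite (@height_ropt (Game GL GR) g gG) orbT.
Qed.

(* Unlike [Lx_rep], the height of G itself is bounded, not its birthday; such
   representatives are closed under the lattice constructions below. *)
Definition inLx (n : nat) (G : game) : bool :=
  [&& ldead G, height G <= n & ~~ nilp (rightOpts G)].

Lemma inLx_Lx_rep n G : inLx n G -> Lx_rep n G.
Proof.
case/and3P=> dG hG G0; split=> //; split; last first.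
  by move=> /(geq_zeroP dG) GZ; rewrite GZ in G0.
pose P b := exists H, ldead H /\ Defs.geq H G /\ height H = b.
have PG : P (height G) by exists G; split=> //; split=> //; exact: geq_refl.
have [b Pb b_min] := ex_minimal_nat PG.
exists b; split; last exact: leq_trans (b_min _ PG) hG.
by split=> // H dH GH; apply: b_min; exists H.
Qed.

Lemma Lx_rep_nonzero n G : Lx_rep n G -> ~~ nilp (rightOpts G).
Proof. by case=> dG [_ G0]; apply/negP => /(geq_zeroP dG). Qed.

Lemma Lx_rep_inLx n G : Lx_rep n G -> exists2 H, inLx n H & dge H G && dge G H.
Proof.
move=> LG; have G0 := Lx_rep_nonzero LG.
case: LG => dG [[b [[[H [dH [[/gge_dgeP HG /gge_dgeP GH] hH]]] _] bn]] _].
have {}HG := HG dH dG; have {}GH := GH dG dH.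
exists H; last by rewrite HG GH.
by rewrite /inLx dH hH bn (dge_nonzero_r GH).
Qed.

Lemma Lx_rep_above n G : Lx_rep n G -> exists2 H, inLx n H & above G =1 above H.
Proof.
move=> LG; have [H HL /andP[HG GH]] := Lx_rep_inLx LG; exists H => // g.
have G0 := Lx_rep_nonzero LG; have /and3P[_ _ H0] := HL.
by apply/idP/idP; [apply: (dge_above G0 H0).1 | apply: (dge_above H0 G0).1].
Qed.

Definition upset n (x : Lstar n) (g : game) : bool :=
  if x is Some G then above (proj1_sig G) g else false.

Lemma Lstar_le_upset n (x y : Lstar n) :
  Lstar_le x y <-> (forall g, upset y g -> upset x g).
Proof.
case: y => [[H LH]|]; last by case: x.
have H0 := Lx_rep_nonzero LH.
case: x => [[G LG]|] /=.
  by rewrite (gge_dgeP LH.1 LG.1); exact: dge_above H0 (Lx_rep_nonzero LG).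
split=> // noH; move: H0; rewrite /nilp -lt0n -has_predT => /hasP[h hH _].
by have /noH := above_ropt hH.
Qed.

Lemma inLx_cat n G H :
  inLx n G -> inLx n H -> inLx n (Game [::] (rightOpts G ++ rightOpts H)).
Proof.
case: G H => [GL GR] [HL HR] /and3P[/andP[/nilP-> dG] hG G0] /and3P[/andP[/nilP-> dH] hH _].
rewrite /inLx height_dead_le /= !all_cat dG dH -!height_dead_le hG hH.
by rewrite /nilp size_cat addn_eq0 negb_and G0.
Qed.

Lemma upset_meet n (x y : Lstar n) :
  exists z : Lstar n, forall g, upset z g = upset x g || upset y g.
Proof.
case: x => [[A LA]|]; last by exists y.
case: y => [[B LB]|]; last by exists (Some (exist _ A LA)) => g; rewrite orbF.
have [A' A'L AA'] := Lx_rep_above LA; have [B' B'L BB'] := Lx_rep_above LB.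
exists (Some (exist _ _ (inLx_Lx_rep (inLx_cat A'L B'L)))) => g.
by rewrite /= AA' BB' /above has_cat.
Qed.

Lemma upset_join n (x y : Lstar n) :
  exists z : Lstar n, forall g, upset z g = upset x g && upset y g.
Proof.
case: x => [[A LA]|]; last by exists None.
case: y => [[B LB]|]; last by exists None => g; rewrite andbF.
have [A' A'L AA'] := Lx_rep_above LA; have [B' B'L BB'] := Lx_rep_above LB.
have above_join g :
    above A' g && above B' g = if djoin A' B' is Some J then above J g else false.
  by rewrite -!dge_single dge_djoin; case: djoin => // J; rewrite dge_single.
case EJ: (djoin A' B') above_join => [J|] above_join; last first.
  by exists None => g; rewrite /= AA' BB' above_join.
have JL : inLx n J.
  have /andP[dJ hJ] := djoin_dead_height EJ.
  case/and3P: A'L => _ hA A0; case/and3P: B'L => _ hB _.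
  have /andP[JA _] : dge J A' && dge J B' by rewrite dge_djoin EJ dge_refl.
  by rewrite /inLx dJ (leq_trans hJ) ?geq_max ?hA ?hB // (dge_nonzero_l JA).
exists (Some (exist _ J (inLx_Lx_rep JL))) => g.
by rewrite /= AA' BB' above_join.
Qed.


Theorem mainTheorem9 : forall n : nat, distributive_lattice (@Lstar_le n).
Proof.
move=> n; apply: (distributive_lattice_rep (@Lstar_le_upset n)).
- exact: upset_join.
- exact: upset_meet.
Qed.
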